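(* Let $1\le p_1\le\cdots\le p_d\le n$ be integers and let $G_0=G_0(p_1,\ldots,p_d)$ be the $d$-uniform $d$-partite hypergraph with vertex classes $V_1,\ldots,V_d$, each identified with $[n]$, in which a $d$-tuple $(x_1,\ldots,x_d)\in[n]^d$ (the edge containing vertex $x_i$ of $V_i$ for each $i$) is a NON-edge if and only if $x_{(i)}\ge p_i$ for every $1\le i\le d$. Then $W_n(p_1,\ldots,p_d)\le \|G_0\|$, where $\|G_0\|$ is the number of edges of $G_0$.
   Context: A $d$-uniform $d$-partite hypergraph has vertex classes $V_1,\ldots,V_d$ and edges that contain exactly one vertex from each class; only such $d$-sets are considered as possible edges. A copy of $K^d_{p_1,\ldots,p_d}$ in $H$ is a permutation $\pi:[d]\to[d]$ together with sets $S_i\subseteq V_i$, $|S_i|=p_{\pi(i)}$, such that all $d$-sets with one vertex from each $S_i$ are edges. $H$ is weakly $K^d_{p_1,\ldots,p_d}$-saturated if its non-edges can be added one at a time in some order so that each added edge creates a new copy of $K^d_{p_1,\ldots,p_d}$ containing that edge. $W_n(p_1,\ldots,p_d)$ is the minimum number of edges in a weakly $K^d_{p_1,\ldots,p_d}$-saturated such hypergraph with $n$ vertices in each class. For $x\in[n]^d$, $x_{(i)}$ is the $i$-th smallest entry of $x$ sorted with repetitions. *)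

From mathcomp Require Import all_boot all_order all_fingroup.
From mathcomp Require Import boolp.
Set Implicit Arguments. Unset Strict Implicit. Unset Printing Implicit Defensive.

(* Vertex classes V_1..V_d are indexed by 'I_d; each class is 'I_n, where the
   ordinal k represents the element k+1 of [n] = {1,...,n}. *)
Definition tup (d n : nat) := {ffun 'I_d -> 'I_n}.
Definition hgraph (d n : nat) := {set tup d n}.

(* A copy of K^d_{p_1..p_d} in H: a permutation pi of [d] and sets S_i of V_i
   with |S_i| = p_(pi i) such that every tuple with x_i in S_i is an edge.
   [copy_containing H p e] : such a copy exists and contains the edge e. *)
Definition copy_containing d n (H : hgraph d n) (p : 'I_d -> nat) (e : tup d n) :=
  exists (pi : {perm 'I_d}) (S : 'I_d -> {set 'I_n}),
    [/\ forall i, #|S i| = p (pi i),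
        forall x : tup d n, (forall i, x i \in S i) -> x \in H
      & forall i, e i \in S i].

(* Weak saturation: the non-edges can be listed as s = e_1,...,e_m (each
   exactly once) so that adding e_j to H + e_1 + ... + e_(j-1) creates a
   (necessarily new) copy of K containing e_j. *)
Definition weakly_sat d n (p : 'I_d -> nat) (H : hgraph d n) :=
  exists s : seq (tup d n),
    [/\ uniq s, forall x, (x \in s) = (x \notin H)
      & forall s1 e s2, s = s1 ++ e :: s2 ->
          copy_containing (H :|: [set x in rcons s1 e]) p e].

(* W_n(p_1,...,p_d): minimum number of edges of a weakly saturated H.
   (The complete hypergraph setT is vacuously weakly saturated, so the
   minimum is over a nonempty family.) *)
Definition W d n (p : 'I_d -> nat) : nat :=
  #|[arg min_(H < [set: tup d n] | `[< weakly_sat p H >]) #|H|]|.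

(* x_(i): sorted entries of x (as elements of [n], i.e. value k+1 for the
   ordinal k); [xsorted x] is the increasing list x_(1) <= ... <= x_(d),
   indexed from 0. *)
Definition xsorted d n (x : tup d n) : seq nat :=
  sort leq [seq (x i).+1 | i <- enum 'I_d].

Definition G0 d n (p : 'I_d -> nat) : hgraph d n :=
  [set x : tup d n | ~~ [forall i : 'I_d, p i <= nth 0 (xsorted x) i]].

From mathcomp Require Import all_boot all_order all_fingroup.
From mathcomp Require Import boolp.
From mathcomp Require Import zify.

Set Implicit Arguments.
Unset Strict Implicit.
Unset Printing Implicit Defensive.

(* Add the non-edges of G_0 in order of increasing coordinate sum.  A non-edge
   e satisfies e_(i) >= p_i, so matching the sorted coordinates of e with the
   p_i gives a permutation pi with p_(pi i) <= e_i; the box whose i-th side is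
   {1, ..., p_(pi i) - 1} together with e_i then has the right sizes, contains
   e, and every other point of it lies coordinatewise below e: it is either an
   edge of G_0 or a non-edge of smaller sum, hence already added. *)

Lemma card_ord_ltn n m : m <= n -> #|[set k : 'I_n | k < m]| = m.
Proof.
move=> le_mn.
have -> : [set k : 'I_n | k < m] = widen_ord le_mn @: [set: 'I_m].
  apply/setP => k; rewrite inE; apply/idP/imsetP => [lt_km|[j _ ->]].
    by exists (Ordinal lt_km) => //; apply: val_inj.
  by rewrite /= ltn_ord.
rewrite card_imset ?cardsT ?card_ord // => i j eq_ij.
by apply: val_inj; apply: (congr1 val eq_ij).
Qed.

Lemma ltn_sum (I : finType) (f g : I -> nat) i0 :
  (forall i, f i <= g i) -> f i0 < g i0 -> \sum_i f i < \sum_i g i.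
Proof.
move=> le_fg lt_i0.
rewrite (bigD1 i0) // [X in _ < X](bigD1 i0) //= -addSn leq_add //.
by apply: leq_sum => i _; apply: le_fg.
Qed.

Lemma perm_le_sort d (a q : 'I_d -> nat) :
  (forall i, q i <= nth 0 (sort leq [seq a i | i <- enum 'I_d]) i) ->
  exists pi : {perm 'I_d}, forall i, q (pi i) <= a i.
Proof.
move=> le_q.
set L := [seq a i | i <- enum 'I_d].
have size_L : size L = d by rewrite size_map size_enum_ord.
have /(perm_iotaP 0) [Is] : perm_eq (sort leq L) L by rewrite perm_sort.
rewrite size_L => perm_Is sort_L.
have size_Is : size Is = d by rewrite (perm_size perm_Is) size_iota.
have Is_lt (k : 'I_d) : nth 0 Is k < d.
  have : nth 0 Is k \in Is by rewrite mem_nth ?size_Is.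
  by rewrite (perm_mem perm_Is) mem_iota.
pose f (k : 'I_d) : 'I_d := Ordinal (Is_lt k).
have inj_f : injective f.
  move=> k1 k2 /(congr1 val) /eqP /=.
  by rewrite nth_uniq ?size_Is ?(perm_uniq perm_Is) ?iota_uniq // => /eqP /val_inj.
have sort_f (k : 'I_d) : nth 0 (sort leq L) k = a (f k).
  rewrite sort_L (nth_map 0) ?size_Is // (nth_map k) ?size_enum_ord //.
  by congr a; apply: val_inj; rewrite /= nth_enum_ord.
exists (perm inj_f)^-1%g => i.
by rewrite -{2}[i](permKV (perm inj_f)) permE -sort_f.
Qed.

Lemma sorted_mem_cat_cons (T : eqType) (w : T -> nat) (s1 s2 : seq T) e y :
  sorted (fun a b => w a <= w b) (s1 ++ e :: s2) ->
  y \in s1 ++ e :: s2 -> w y < w e -> y \in s1.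
Proof.
rewrite sorted_cat_cons mem_cat in_cons => /andP [_].
rewrite path_sortedE; last by move=> a b c; apply: leq_trans.
case/andP => /allP le_e _ /or3P [// | /eqP -> | /le_e le_ey]; first by rewrite ltnn.
by move=> /leq_trans /(_ le_ey); rewrite ltnn.
Qed.

Section Box.

Variables (d n : nat) (e : tup d n) (q : 'I_d -> nat).

Definition box i : {set 'I_n} := [set k : 'I_n | (k < (q i).-1) || (k == e i)].

Hypothesis q_gt0 : forall i, 0 < q i.
Hypothesis q_le : forall i, q i <= (e i).+1.

Lemma card_box i : #|box i| = q i.
Proof.
have -> : box i = e i |: [set k : 'I_n | k < (q i).-1].
  by apply/setP => k; rewrite !inE orbC.
have := q_le i; have := q_gt0 i; have := ltn_ord (e i) => *.
rewrite cardsU1 card_ord_ltn; last by lia.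
by rewrite inE ltnNge (_ : (q i).-1 <= e i); lia.
Qed.

Lemma box_le (x : tup d n) i : x i \in box i -> x i <= e i.
Proof. by rewrite inE => /orP [|/eqP -> //]; have := q_le i; lia. Qed.

Lemma mem_box i : e i \in box i.
Proof. by rewrite inE eqxx orbT. Qed.

End Box.

Definition weight d n (x : tup d n) : nat := \sum_i (x i : nat).

Lemma weight_lt d n (x y : tup d n) :
  (forall i, x i <= y i) -> x != y -> weight x < weight y.
Proof.
move=> le_xy neq_xy.
have [i neq_i] : exists i, x i != y i.
  apply/existsP; apply: contraNT neq_xy => /existsPn eq_xy.
  by apply/eqP/ffunP => i; apply/eqP/negPn.
by apply: (ltn_sum _ (i0 := i)) => //; rewrite ltn_neqAle le_xy andbT.
Qed.

Lemma G0_weakly_sat d n (p : 'I_d -> nat) :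
  (forall i, 0 < p i) -> weakly_sat p (G0 n p).
Proof.
move=> p_gt0.
pose s := sort (fun a b => weight a <= weight b) (enum (~: G0 n p)).
have mem_s x : (x \in s) = (x \notin G0 n p) by rewrite mem_sort mem_enum in_setC.
have sorted_s : sorted (fun a b => weight a <= weight b) s.
  by apply: sort_sorted => a b; apply: leq_total.
exists s; split => //; first by rewrite sort_uniq enum_uniq.
move=> s1 e s2 def_s.
have : e \in s by rewrite def_s mem_cat mem_head orbT.
rewrite mem_s inE negbK => /forallP /perm_le_sort [pi le_pi].
exists pi, (box e (p \o pi)); split => [i|x x_box|i]; last exact: mem_box.
- by apply: card_box => // j; apply: p_gt0.
- have le_xe i : x i <= e i by apply: box_le le_pi _ _ (x_box i).
  rewrite in_setU; have [// | xNG0 /=] := boolP (x \in G0 n p).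
  rewrite inE mem_rcons in_cons; have [// | neq_xe /=] := eqVneq x e.
  rewrite def_s in sorted_s; apply: (sorted_mem_cat_cons sorted_s).
    by rewrite -def_s mem_s.
  exact: weight_lt.
Qed.

Lemma W_le_weakly_sat d n (p : 'I_d -> nat) (H : hgraph d n) :
  weakly_sat p H -> W n p <= #|H|.
Proof.
move=> ws_H; rewrite /W; case: arg_minnP => [|G _ minG]; last exact/minG/asboolP.
apply/asboolP; exists [::]; split => // [x|[] //].
by rewrite in_setT.
Qed.

Theorem lemma1 (d n : nat) (p : 'I_d -> nat) :
  0 < d ->
  (forall i : 'I_d, 1 <= p i) ->
  (forall i j : 'I_d, i <= j -> p i <= p j) ->
  (forall i : 'I_d, p i <= n) ->
  W n p <= #|G0 n p|.
Proof.
move=> _ p_gt0 _ _.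
exact/W_le_weakly_sat/G0_weakly_sat.
Qed.
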